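(* Let $G$ be a complete edge-colored graph with vertex set $V$, and for every strong module $M$ of $G$ let $\ell^M$ be a labeling of the quotient graph $G[M]/\mathbb{P}_{\max}(M)$. Define the relation $\prec$ on $V$ by: for distinct $u,v\in V$, $u\prec v$ iff $\ell^{M^{u,v}}(M^{u,v}_u)<\ell^{M^{u,v}}(M^{u,v}_v)$. Then $\prec$ is a strict total order on $V$, and consequently the map $\ell_\prec:V\to\{1,\dots,|V|\}$ with $\ell_\prec(u)<\ell_\prec(v)\iff u\prec v$ is a labeling of $G$.
   Context: A complete edge-colored graph is a complete graph on a finite set $V$ with edges partitioned into nonempty color classes. A module is a set $M\subseteq V$ such that for every $v\notin M$ all edges $\{u,v\}$, $u\in M$, have the same color; a strong module is a nonempty module that is comparable by inclusion or disjoint with every other module. The strong modules form a hierarchy (tree) containing $V$ and all singletons. For a strong module $M$ with $|M|\ge2$, $\mathbb{P}_{\max}(M)$ is the set of inclusion-maximal strong modules properly contained in $M$ (a partition of $M$), and $G[M]/\mathbb{P}_{\max}(M)$ is the complete graph on $\mathbb{P}_{\max}(M)$ in which $\{M_a,M_b\}$ has the common color of all edges between $M_a$ and $M_b$; for $|M|=1$ it is the one-vertex graph. A labeling of a graph with vertex set $W$ is a bijection $W\to\{1,\dots,|W|\}$. For distinct $u,v\in V$, $M^{u,v}$ is the inclusion-minimal strong module containing $u$ and $v$, and $M^{u,v}_u,M^{u,v}_v\in\mathbb{P}_{\max}(M^{u,v})$ are the (distinct) members containing $u$ and $v$, respectively. A strict total order is an irreflexive, transitive relation in which any two distinct elements are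 comparable. *)

From mathcomp Require Import all_boot.
Set Implicit Arguments. Unset Strict Implicit. Unset Printing Implicit Defensive.

Section Modules.
Variables (T : finType) (C : eqType) (col : T -> T -> C).

Definition is_module (M : {set T}) : bool :=
  [forall v, (v \notin M) ==>
     [forall u in M, [forall u' in M, col u v == col u' v]]].

Definition strong_module (M : {set T}) : bool :=
  [&& M != set0, is_module M &
      [forall N : {set T}, is_module N ==>
         [|| N \subset M, M \subset N | [disjoint M & N]]]].

Definition Pmax (M : {set T}) : {set {set T}} :=
  [set N : {set T} | strong_module N && (N \proper M) &&
     [forall N' : {set T}, (strong_module N' && (N' \proper M)) ==>
        (N \subset N') ==> (N' == N)]].

(* vertex set of the quotient graph G[M]/P_max(M); one vertex if |M| = 1 *)
Definition qverts (M : {set T}) : {set {set T}} :=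
  if 2 <= #|M| then Pmax M else [set M].

Definition is_labeling (W : {set {set T}}) (l : {set T} -> nat) : Prop :=
  {in W &, injective l} /\ (forall N, N \in W -> 1 <= l N <= #|W|).

Definition min_strong (u v : T) (M : {set T}) : bool :=
  [&& strong_module M, u \in M, v \in M &
      [forall N : {set T}, [&& strong_module N, u \in N & v \in N] ==>
         (M \subset N)]].

Definition prec (lab : {set T} -> {set T} -> nat) (u v : T) : bool :=
  (u != v) &&
  [exists M : {set T}, exists Mu : {set T}, exists Mv : {set T},
     [&& min_strong u v M, Mu \in Pmax M, Mv \in Pmax M, u \in Mu, v \in Mv &
         lab M Mu < lab M Mv]].

End Modules.

From mathcomp Require Import all_boot.
Set Implicit Arguments. Unset Strict Implicit. Unset Printing Implicit Defensive.

(* Strong modules form a laminar family: two of them sharing a vertex are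
   nested.  Hence M^{u,v} is unique, u and v lie in distinct members of
   P_max(M^{u,v}), and for every u' in M^{u,v}_u and v' in M^{u,v}_v we get
   M^{u',v'} = M^{u,v} with the same two parts, so u' ≺ v' iff u ≺ v.
   Transitivity of u ≺ v ≺ w then follows by comparing M^{u,v} and M^{v,w}
   (both contain v): if they differ, the smaller one lies inside a single
   part of the larger, and the comparison reduces to one already made. *)

Lemma strict_total_rank (T : finType) (r : rel T) :
  irreflexive r -> transitive r -> (forall u v, u != v -> r u v || r v u) ->
  exists l : T -> nat,
    [/\ injective l, forall u, 1 <= l u <= #|T| & forall u v, (l u < l v) = r u v].
Proof.
move=> r_irr r_trans r_total.
pose l u := #|[set x | r x u]|.+1.
have lt_l u v : r u v -> l u < l v.
  move=> ruv; rewrite ltnS; apply: proper_card; apply/properP; split.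
    by apply/subsetP=> x; rewrite !inE => /r_trans; apply.
  by exists u; rewrite inE ?ruv ?r_irr.
have l_total u v : u != v -> (l u < l v) || (l v < l u).
  by move=> /r_total /orP[] /lt_l ->; rewrite ?orbT.
exists l; split.
- move=> u v luv; apply/eqP; apply: contraT => /l_total.
  by rewrite luv ltnn.
- move=> u; rewrite ltnS -(cardsT T); apply: proper_card.
  by rewrite properT; apply/negP=> /eqP/setP/(_ u); rewrite !inE r_irr.
- move=> u v; apply/idP/idP; last exact: lt_l.
  have [-> | /r_total /orP[] // /lt_l lvu luv] := eqVneq u v; first by rewrite ltnn.
  by have := ltn_trans luv lvu; rewrite ltnn.
Qed.

Section StrongModules.
Variables (T : finType) (C : eqType) (col : T -> T -> C).
Local Notation strong := (strong_module col).
Local Notation Pmax := (Pmax col).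
Local Notation min_strong := (min_strong col).

Lemma strong_module_setT (x : T) : strong setT.
Proof.
apply/and3P; split.
- by apply/set0Pn; exists x; rewrite in_setT.
- by apply/forallP=> v; rewrite in_setT.
- by apply/forallP=> N; rewrite subsetT implybT.
Qed.

Lemma strong_module_set1 (x : T) : strong [set x].
Proof.
apply/and3P; split.
- by apply/set0Pn; exists x; rewrite set11.
- apply/forallP=> v; apply/implyP=> _.
  by apply/forall_inP=> u /set1P->; apply/forall_inP=> u' /set1P->.
- apply/forallP=> N; apply/implyP=> _.
  have [xN | xNN] := boolP (x \in N); first by rewrite sub1set xN orbT.
  by rewrite disjoints1 xNN !orbT.
Qed.

Lemma strong_module_nested M N x : strong M -> strong N -> x \in M -> x \in N ->
  (N \subset M) || (M \subset N).
Proof.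
move=> /and3P[_ _ /forallP/(_ N) laminar] /and3P[_ modN _] xM xN.
move: laminar; rewrite modN /= => /or3P[-> | -> | MdisN]; rewrite ?orbT //.
by rewrite (disjointFr MdisN xM) in xN.
Qed.

Lemma PmaxP (P M : {set T}) : reflect [/\ strong P, P \proper M &
    forall N, strong N -> N \proper M -> P \subset N -> N = P]
  (P \in Pmax M).
Proof.
rewrite inE; apply: (iffP andP) => [[/andP[sP PM] /forallP maxP] | [sP PM maxP]].
  by split=> // N sN NM PN; apply/eqP; move: (maxP N); rewrite sN NM PN.
split; first by rewrite sP PM.
apply/forallP=> N; apply/implyP=> /andP[sN NM].
by apply/implyP=> /maxP-> //; rewrite eqxx.
Qed.

Lemma sub_Pmax P M N x : P \in Pmax M -> strong N -> N \proper M ->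
  x \in P -> x \in N -> N \subset P.
Proof.
case/PmaxP=> sP _ maxP sN NM xP xN.
by case/orP: (strong_module_nested sP sN xP xN) => // PN; rewrite (maxP N).
Qed.

Lemma Pmax_eq P Q M x : P \in Pmax M -> Q \in Pmax M -> x \in P -> x \in Q -> P = Q.
Proof.
move=> PM QM xP xQ.
have [[sP PsubM _] [sQ QsubM _]] := (PmaxP _ _ PM, PmaxP _ _ QM).
apply/eqP; rewrite eqEsubset.
by rewrite (sub_Pmax QM sP PsubM xQ xP) (sub_Pmax PM sQ QsubM xP xQ).
Qed.

Lemma Pmax_sub P M : P \in Pmax M -> P \subset M.
Proof. by case/PmaxP=> _ /proper_sub. Qed.

Lemma Pmax_cover (M : {set T}) x : x \in M -> 1 < #|M| ->
  exists2 P, P \in Pmax M & x \in P.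
Proof.
move=> xM cardM.
pose p N := [&& strong N, N \proper M & x \in N].
have p1 : p [set x].
  by rewrite /p strong_module_set1 set11 andbT properEcard sub1set xM cards1.
case: (arg_maxnP (fun N : {set T} => #|N|) p1) => P /and3P[sP PM xP] maxP.
exists P => //; apply/PmaxP; split=> // N sN NM PN.
by apply/eqP; rewrite eq_sym eqEcard PN; apply: maxP; rewrite /p sN NM (subsetP PN).
Qed.

Lemma min_strongP u v M : reflect [/\ strong M, u \in M, v \in M &
    forall N, strong N -> u \in N -> v \in N -> M \subset N]
  (min_strong u v M).
Proof.
apply: (iffP and4P) => [[sM uM vM /forallP minM] | [sM uM vM minM]].
  by split=> // N sN uN vN; move: (minM N); rewrite sN uN vN.
by split=> //; apply/forallP=> N; apply/implyP=> /and3P[]; apply: minM.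
Qed.

Lemma min_strong_sym u v M : min_strong u v M -> min_strong v u M.
Proof.
case/min_strongP=> sM uM vM minM.
by apply/min_strongP; split=> // N sN vN uN; apply: minM.
Qed.

Lemma min_strong_unique u v M N : min_strong u v M -> min_strong u v N -> M = N.
Proof.
case/min_strongP=> sM uM vM minM /min_strongP[sN uN vN minN].
by apply/eqP; rewrite eqEsubset minM // minN.
Qed.

Lemma min_strong_exists u v : exists M, min_strong u v M.
Proof.
pose p N := [&& strong N, u \in N & v \in N].
have pT : p setT by rewrite /p (strong_module_setT u) !in_setT.
case: (arg_minnP (fun N : {set T} => #|N|) pT) => M /and3P[sM uM vM] minM.
exists M; apply/min_strongP; split=> // N sN uN vN.
case/orP: (strong_module_nested sM sN uM uN) => // NM.
suff /eqP <- : N == M by [].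
by rewrite eqEcard NM; apply: minM; rewrite /p sN uN vN.
Qed.

Lemma min_strong_separated u v M P : min_strong u v M -> P \in Pmax M ->
  u \in P -> v \notin P.
Proof.
case/min_strongP=> _ _ _ minM /PmaxP[sP PM _] uP; apply/negP=> vP.
by have := proper_sub_trans PM (minM P sP uP vP); rewrite properxx.
Qed.

Lemma min_strong_parts_neq u v M (P Q : {set T}) : min_strong u v M ->
  P \in Pmax M -> u \in P -> v \in Q -> P != Q.
Proof.
by move=> mM PM uP vQ; apply: contraNneq (min_strong_separated mM PM uP) => ->.
Qed.

Lemma min_strong_Pmax u v M P Q : strong M -> P \in Pmax M -> Q \in Pmax M ->
  P != Q -> u \in P -> v \in Q -> min_strong u v M.
Proof.
move=> sM PM QM PQ uP vQ.
have [uM vM] := (subsetP (Pmax_sub PM) u uP, subsetP (Pmax_sub QM) v vQ).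
apply/min_strongP; split=> // N sN uN vN.
case/orP: (strong_module_nested sM sN uM uN) => // NM.
have [<- // | NneM] := eqVneq N M.
have NP : N \subset P by apply: (sub_Pmax PM sN _ uP uN); rewrite properEneq NneM.
by rewrite (Pmax_eq PM QM (subsetP NP v vN) vQ) eqxx in PQ.
Qed.

Lemma card_min_strong u v M : u != v -> min_strong u v M -> 1 < #|M|.
Proof.
move=> uv /min_strongP[_ uM vM _].
have uvM : [set u; v] \subset M by rewrite subUset !sub1set uM vM.
by have := subset_leq_card uvM; rewrite cards2 uv.
Qed.

Lemma min_strong_parts u v : u != v -> exists M P Q,
  [/\ min_strong u v M, P \in Pmax M, Q \in Pmax M, u \in P & v \in Q].
Proof.
move=> uv; have [M mM] := min_strong_exists u v.
have [_ uM vM _] := min_strongP _ _ _ mM; have cardM := card_min_strong uv mM.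
have [[P PM uP] [Q QM vQ]] := (Pmax_cover uM cardM, Pmax_cover vM cardM).
by exists M, P, Q.
Qed.

Section Order.
Variable lab : {set T} -> {set T} -> nat.
Hypothesis lab_inj :
  forall M, strong M -> 1 < #|M| -> {in Pmax M &, injective (lab M)}.
Local Notation prec := (prec col lab).

Lemma precE u v M P Q : min_strong u v M -> P \in Pmax M -> Q \in Pmax M ->
  u \in P -> v \in Q -> prec u v = (lab M P < lab M Q).
Proof.
move=> mM PM QM uP vQ.
have uv : u != v by apply: contraNneq (min_strong_separated mM PM uP) => <-.
rewrite /prec uv /=; apply/existsP/idP => [[M' /existsP[P' /existsP[Q']]] | ltPQ].
  case/andP=> /(min_strong_unique mM) <- /and5P[P'M Q'M uP' vQ'].
  by rewrite (Pmax_eq P'M PM uP' uP) (Pmax_eq Q'M QM vQ' vQ).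
by exists M; apply/existsP; exists P; apply/existsP; exists Q; rewrite mM PM QM uP vQ.
Qed.

Lemma prec_Pmax_congr u v u' v' M P Q : min_strong u v M ->
  P \in Pmax M -> Q \in Pmax M -> u \in P -> u' \in P -> v \in Q -> v' \in Q ->
  prec u' v' = prec u v.
Proof.
move=> mM PM QM uP u'P vQ v'Q.
have [sM _ _ _] := min_strongP _ _ _ mM.
have mM' := min_strong_Pmax sM PM QM (min_strong_parts_neq mM PM uP vQ) u'P v'Q.
by rewrite (precE mM PM QM uP vQ) (precE mM' PM QM u'P v'Q).
Qed.

Lemma prec_irr : irreflexive prec.
Proof. by move=> u; rewrite /prec eqxx. Qed.

Lemma prec_neq u v : prec u v -> u != v.
Proof. by case/andP. Qed.

Lemma prec_total u v : u != v -> prec u v || prec v u.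
Proof.
move=> uv; have [M [P [Q [mM PM QM uP vQ]]]] := min_strong_parts uv.
rewrite (precE mM PM QM uP vQ) (precE (min_strong_sym mM) QM PM vQ uP).
have [sM _ _ _] := min_strongP _ _ _ mM.
have labPQ : lab M P != lab M Q.
  apply: contra (min_strong_parts_neq mM PM uP vQ) => /eqP.
  by move/(lab_inj sM (card_min_strong uv mM) PM QM)->.
by rewrite -neq_ltn.
Qed.

Lemma prec_trans : transitive prec.
Proof.
move=> v u w uv vw.
have [A [Au [Av [mA AuA AvA uAu vAv]]]] := min_strong_parts (prec_neq uv).
have [B [Bv [Bw [mB BvB BwB vBv wBw]]]] := min_strong_parts (prec_neq vw).
have [[sA _ vA _] [sB vB wB _]] := (min_strongP _ _ _ mA, min_strongP _ _ _ mB).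
have [eAB | neAB] := eqVneq A B.
  move: mB BvB BwB uv vw; rewrite -{}eAB => mB BvA BwA.
  rewrite (precE mA AuA AvA uAu vAv) (precE mB BvA BwA vBv wBw).
  rewrite -(Pmax_eq AvA BvA vAv vBv) => lt_uv lt_vw.
  have AuBw : Au != Bw.
    by apply: contraTneq (ltn_trans lt_uv lt_vw) => ->; rewrite ltnn.
  have mA' := min_strong_Pmax sA AuA BwA AuBw uAu wBw.
  by rewrite (precE mA' AuA BwA uAu wBw) (ltn_trans lt_uv).
case/orP: (strong_module_nested sA sB vA vB) => [BA | AB].
  have BAv : B \subset Av.
    by apply: (sub_Pmax AvA sB _ vAv vB); rewrite properEneq eq_sym neAB.
  by rewrite (prec_Pmax_congr mA AuA AvA uAu uAu vAv (subsetP BAv w wB)).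
have ABv : A \subset Bv by apply: (sub_Pmax BvB sA _ vBv vA); rewrite properEneq neAB.
have uBv : u \in Bv by apply: (subsetP ABv); apply: (subsetP (Pmax_sub AuA)).
by rewrite (prec_Pmax_congr mB BvB BwB vBv uBv wBw wBw).
Qed.

End Order.
End StrongModules.

Theorem lemma4p6 (T : finType) (C : eqType) (col : T -> T -> C)
  (col_sym : forall u v : T, u != v -> col u v = col v u)
  (lab : {set T} -> {set T} -> nat)
  (lab_ok : forall M : {set T}, strong_module col M ->
              is_labeling (qverts col M) (lab M)) :
  (* ≺ is a strict total order on V *)
  ((forall u : T, ~~ prec col lab u u) /\
   (forall u v w : T, prec col lab u v -> prec col lab v w -> prec col lab u w) /\
   (forall u v : T, u != v -> prec col lab u v \/ prec col lab v u)) /\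
  (* the induced labeling l_≺ of G *)
  (exists l : T -> nat,
     injective l /\ (forall u, 1 <= l u <= #|T|) /\
     (forall u v : T, l u < l v <-> prec col lab u v)).
Proof.
have lab_inj M : strong_module col M -> 1 < #|M| ->
    {in Pmax col M &, injective (lab M)}.
  by move=> sM cardM; have [] := lab_ok M sM; rewrite /qverts cardM.
have irr := prec_irr col lab.
have trans : transitive (prec col lab) by apply: prec_trans.
have total := prec_total lab_inj.
split.
  split=> [u | ]; first by rewrite irr.
  by split=> [u v w | u v /total/orP //]; apply: trans.
have [l [l_inj l_range l_mono]] := strict_total_rank irr trans total.
by exists l; split=> //; split=> // u v; rewrite l_mono.
Qed.
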